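(* Fix finite nonempty $A$, $\Omega$, a full-support prior $\mu_0$ on $\Omega$, a finite $M$ with $|M|>\max\{|\Omega|,|A|\}$, and a strictly supermodular $u_S:A\times\Omega\to\mathbb R$. There is a set of Receiver preferences $u_R:A\times\Omega\to[0,1]$ of Lebesgue measure one in $[0,1]^{|A||\Omega|}$ such that, for every $u_R$ in it, if Sender values committing to a curve, then curve-committed Sender values randomization.
   Context: Messaging strategies $\sigma:\Omega\to\Delta M$, action strategies $\rho:M\to\Delta A$, $U_i(\sigma,\rho)=\sum_{\omega,m,a}\mu_0(\omega)\sigma(m|\omega)\rho(a|m)u_i(a,\omega)$. $(\sigma,\rho)$ is S-BR if $\sigma\in\arg\max_{\sigma'}U_S(\sigma',\rho)$ and R-BR if $\rho\in\arg\max_{\rho'}U_R(\sigma,\rho')$; a cheap-talk equilibrium is both, and the cheap-talk payoff is the max of $U_S$ over cheap-talk equilibria. For $\sigma$, let $D(\sigma)=\{\sigma':\sum_\omega\mu_0(\omega)\sigma'(m|\omega)=\sum_\omega\mu_0(\omega)\sigma(m|\omega)\ \forall m\}$. A profile $(\sigma^*,\rho^* )$ is a curve equilibrium if $\sigma^*\in\arg\max_{\sigma\in D(\sigma^* )}U_S(\sigma,\rho^* )$ and $\rho^*\in\arg\max_\rho U_R(\sigma^*,\rho)$. The curve payoff is the max of $U_S$ over curve equilibria; the curve partitional payoff is the max over curve equilibria with partitional $\sigma$ ($\sigma$ is partitional if for every $\omega$ some $m$ has $\sigma(m|\omega)=1$). Sender values committing to a curve if the curve payoff strictly exceeds the cheap-talk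 payoff; curve-committed Sender values randomization if the curve payoff strictly exceeds the curve partitional payoff. $u_S$ is strictly supermodular if there are total orders on $A$ and on $\Omega$ such that for $a'>a$ and $\omega'>\omega$, $u_S(a',\omega')-u_S(a,\omega')>u_S(a',\omega)-u_S(a,\omega)$. *)

From HB Require Import structures.
From mathcomp Require Import all_boot all_order all_algebra.
From mathcomp Require Import all_classical all_reals.
Set Implicit Arguments. Unset Strict Implicit. Unset Printing Implicit Defensive.
Import Order.TTheory GRing.Theory Num.Theory.
Local Open Scope ring_scope.
Local Open Scope classical_set_scope.

Section Game.
Variables (R : realType) (A Om M : finType).

Definition is_dist (T : finType) (p : T -> R) : Prop :=
  (forall t, 0 <= p t) /\ \sum_(t : T) p t = 1.

(* messaging strategy sigma : Omega -> Delta M, written sigma w m = sigma(m|w) *)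
Definition msg_strat (s : Om -> M -> R) : Prop := forall w, is_dist (s w).
(* action strategy rho : M -> Delta A, written rho m a = rho(a|m) *)
Definition act_strat (r : M -> A -> R) : Prop := forall m, is_dist (r m).

Variable mu0 : Om -> R.

Definition U (u : A -> Om -> R) (s : Om -> M -> R) (r : M -> A -> R) : R :=
  \sum_(w : Om) \sum_(m : M) \sum_(a : A) mu0 w * s w m * r m a * u a w.

Variables (uS uR : A -> Om -> R).

Definition S_BR s r : Prop :=
  forall s', msg_strat s' -> U uS s' r <= U uS s r.
Definition R_BR s r : Prop :=
  forall r', act_strat r' -> U uR s r' <= U uR s r.

Definition cheap_talk_eq s r : Prop :=
  msg_strat s /\ act_strat r /\ S_BR s r /\ R_BR s r.

Definition same_marginal (s s' : Om -> M -> R) : Prop :=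
  forall m, \sum_(w : Om) mu0 w * s' w m = \sum_(w : Om) mu0 w * s w m.

Definition curve_eq s r : Prop :=
  msg_strat s /\ act_strat r /\
  (forall s', msg_strat s' -> same_marginal s s' -> U uS s' r <= U uS s r) /\
  R_BR s r.

Definition partitional (s : Om -> M -> R) : Prop :=
  forall w, exists m, s w m = 1.

(* payoffs: the (attained) maximum of U_S over the equilibrium set, via sup *)
Definition cheap_talk_payoff : R :=
  sup [set x | exists s r, cheap_talk_eq s r /\ x = U uS s r].
Definition curve_payoff : R :=
  sup [set x | exists s r, curve_eq s r /\ x = U uS s r].
Definition curve_partitional_payoff : R :=
  sup [set x | exists s r, (curve_eq s r /\ partitional s) /\ x = U uS s r].

Definition values_committing : Prop := cheap_talk_payoff < curve_payoff.
Definition values_randomization : Prop := curve_partitional_payoff < curve_payoff.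

End Game.

Definition strict_total_order (T : eqType) (lt : rel T) : Prop :=
  (forall x, ~~ lt x x) /\
  (forall x y z, lt x y -> lt y z -> lt x z) /\
  (forall x y, x != y -> lt x y || lt y x).

Definition strictly_supermodular (R : realType) (A Om : finType)
    (uS : A -> Om -> R) : Prop :=
  exists (ltA : rel A) (ltO : rel Om),
    strict_total_order ltA /\ strict_total_order ltO /\
    forall a a' w w', ltA a a' -> ltO w w' ->
      uS a' w - uS a w < uS a' w' - uS a w'.

Definition unit_cube (R : realType) (A Om : finType) : set (A -> Om -> R) :=
  [set u | forall a w, 0 <= u a w <= 1].

Definition box_vol (R : realType) (A Om : finType) (lo hi : A -> Om -> R) : R :=
  \prod_(a : A) \prod_(w : Om) (hi a w - lo a w).

Definition lebesgue_null (R : realType) (A Om : finType)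
    (N : set (A -> Om -> R)) : Prop :=
  forall eps : R, 0 < eps ->
    exists (lo hi : nat -> A -> Om -> R),
      (forall k a w, lo k a w <= hi k a w) /\
      (N `<=` \bigcup_k [set u | forall a w, lo k a w <= u a w <= hi k a w]) /\
      (forall n, \sum_(k < n) box_vol (lo k) (hi k) <= eps).

Definition full_measure_in_cube (R : realType) (A Om : finType)
    (S : set (A -> Om -> R)) : Prop :=
  S `<=` @unit_cube R A Om /\ lebesgue_null (@unit_cube R A Om `\` S).

From HB Require Import structures.
From mathcomp Require Import all_boot all_order all_algebra.
From mathcomp Require Import all_classical all_reals.
From mathcomp Require Import ring lra zify.
Set Implicit Arguments. Unset Strict Implicit. Unset Printing Implicit Defensive.
Import Order.TTheory GRing.Theory Num.Theory.
Local Open Scope ring_scope.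
Local Open Scope classical_set_scope.

(* Call Receiver preferences generic when no nonempty set of types leaves the
   Receiver exactly indifferent between two actions; the others lie on finitely
   many hyperplanes, a null set.  For generic preferences the Receiver's reply to
   each message of a partitional Sender strategy is unique, so a partitional curve
   equilibrium is a partition of the types with its induced actions.  If no type
   prefers the action induced for another type, it is a cheap-talk equilibrium.
   Otherwise supermodularity makes the induced actions monotone in the type, and
   there are a type v and an induced action c that v strictly prefers, with all
   higher types receiving c or more and no induced action strictly in between.
   Moving a little mass of v to the message inducing c keeps the messaging
   assortative, hence optimal for its marginal, and keeps the Receiver's strict best
   replies: the result is a curve equilibrium paying Sender strictly more.  So each
   partitional value is at most the cheap-talk payoff or strictly below the curve
   payoff, and as there are finitely many partitions, the partitional payoff is
   below the curve payoff whenever the cheap-talk payoff is. *)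

(** * Strict total orders on finite types *)

Section StrictTotalOrder.
Variables (T : finType) (lt : rel T).
Hypothesis lt_order : strict_total_order lt.

Lemma strict_total_order_flip : strict_total_order (fun x y => lt y x).
Proof.
have [irr [tr tot]] := lt_order.
split=> //; split=> [x y z hxy hyz | x y nxy]; first exact: tr hyz hxy.
by rewrite orbC tot.
Qed.

Let le x y := (x == y) || lt x y.

Let le_refl : reflexive le.
Proof. by move=> x; rewrite /le eqxx. Qed.

Let le_trans : transitive le.
Proof.
have [_ [tr _]] := lt_order.
move=> y x z /orP[/eqP -> // | hxy] /orP[/eqP <- | hyz]; first by rewrite /le hxy orbT.
by rewrite /le (tr _ _ _ hxy hyz) orbT.
Qed.

Definition sorted_elems := sort le (enum T).
Definition rank x := index x sorted_elems.

Let sorted_elems_sorted : sorted le sorted_elems.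
Proof.
apply: sort_sorted => x y; rewrite /le.
by have [// | nxy] := eqVneq x y; rewrite /= lt_order.2.2.
Qed.

Let mem_sorted_elems x : x \in sorted_elems.
Proof. by rewrite mem_sort mem_enum. Qed.

Lemma size_sorted_elems : size sorted_elems = #|T|.
Proof. by rewrite size_sort cardE. Qed.

Lemma rank_lt_card x : (rank x < #|T|)%N.
Proof. by rewrite -size_sorted_elems index_mem. Qed.

Lemma nth_rank x0 x : nth x0 sorted_elems (rank x) = x.
Proof. exact: nth_index. Qed.

Lemma rank_nth x0 j : (j < #|T|)%N -> rank (nth x0 sorted_elems j) = j.
Proof.
by move=> hj; rewrite /rank index_uniq ?size_sorted_elems ?sort_uniq ?enum_uniq.
Qed.

Lemma ltn_rank x y : (rank x < rank y)%N = lt x y.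
Proof.
have [irr [tr _]] := lt_order.
apply/idP/idP => [hxy | lt_xy].
  have := sorted_ltn_index le_trans sorted_elems_sorted x y (mem_sorted_elems x)
    (mem_sorted_elems y) hxy.
  by case/orP=> // /eqP exy; move: hxy; rewrite exy ltnn.
rewrite ltnNge; apply/negP => hyx.
have := sorted_leq_index le_trans le_refl sorted_elems_sorted y x (mem_sorted_elems y)
  (mem_sorted_elems x) hyx.
case/orP=> [/eqP eyx | lt_yx]; first by move: lt_xy; rewrite eyx (negbTE (irr x)).
by move: (tr _ _ _ lt_xy lt_yx); rewrite (negbTE (irr x)).
Qed.

Lemma exists_lt_max (P : pred T) x :
  P x -> exists2 y, P y & forall z, P z -> ~~ lt y z.
Proof.
move=> Px; case: (arg_maxnP rank Px) => y Py ymax.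
by exists y => // z /ymax; rewrite -ltn_rank -leqNgt.
Qed.

End StrictTotalOrder.

Definition supermodular_for (R : realDomainType) (A Om : Type)
    (ltA : rel A) (ltO : rel Om) (u : A -> Om -> R) :=
  forall a a' w w', ltA a a' -> ltO w w' -> u a' w - u a w < u a' w' - u a w'.

Lemma supermodular_for_flip (R : realFieldType) (A Om : Type)
    (ltA : rel A) (ltO : rel Om) (u : A -> Om -> R) :
  supermodular_for ltA ltO u -> supermodular_for (fun x y => ltA y x) (fun x y => ltO y x) u.
Proof. by move=> u_sm a a' w w' lt_a'a lt_w'w; have := u_sm _ _ _ _ lt_a'a lt_w'w; lra. Qed.

Lemma sumr_delta (R : pzSemiRingType) (T : finType) (t0 : T) (F : T -> R) :
  \sum_t (t == t0)%:R * F t = F t0.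
Proof. by under eq_bigr do rewrite mulr_natl mulrb; rewrite -big_mkcond big_pred1_eq. Qed.

Lemma sumr_delta1 (R : pzSemiRingType) (T : finType) (t0 : T) :
  \sum_(t : T) ((t == t0)%:R : R) = 1.
Proof. by under eq_bigr do rewrite -[_%:R]mulr1; rewrite sumr_delta. Qed.

Lemma sumr_le_support (R : numDomainType) (F : nat -> R) K n : (forall k, 0 <= F k) ->
  (forall k, (K <= k)%N -> F k = 0) -> \sum_(k < n) F k <= \sum_(k < K) F k.
Proof.
move=> F_ge0 F0; rewrite -!(big_mkord xpredT F).
case: (leqP n K) => [le_nK | lt_Kn].
  by rewrite (big_cat_nat (leq0n n) le_nK) /= lerDl sumr_ge0.
rewrite (big_cat_nat (leq0n K) (ltnW lt_Kn)) /= [X in _ + X]big1_seq ?addr0 //.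
by move=> k /andP [_]; rewrite mem_index_iota => /andP [le_Kk _]; apply: F0.
Qed.

Lemma dist_eq_delta (R : realType) (T : finType) (p : T -> R) t0 :
  is_dist p -> p t0 = 1 -> p = fun t => (t == t0)%:R.
Proof.
move=> [p_ge0 p_sum] pt0; apply: funext => t.
have [-> // | nt] := eqVneq t t0.
have rest0 : \sum_(t' | t' != t0) p t' = 0.
  by move: p_sum; rewrite (bigD1 t0) //= pt0 -[RHS]addr0 => /addrI.
by rewrite (psumr_eq0P (fun i _ => p_ge0 i) rest0).
Qed.

Lemma separating_constant (R : realDomainType) (T : finType) (P Q : pred T)
    (p q : T -> R) :
  (forall x y, P x -> Q y -> p x <= q y) ->
  exists c, (forall x, P x -> p x <= c) /\ (forall y, Q y -> c <= q y).
Proof.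
move=> pq; case: (pickP P) => [x0 Px0 | P0].
  case: (arg_maxP p Px0) => x Px xmax.
  by exists (p x); split=> // y; apply: pq.
case: (pickP Q) => [y0 Qy0 | Q0].
  case: (arg_minP q Qy0) => y Qy ymin.
  by exists (q y); split=> // x; rewrite P0.
by exists 0; split=> x; rewrite ?P0 ?Q0.
Qed.

Lemma sup_lt_finite_escape (R : realType) (I : finType) (v : I -> R) (P : set R) c d :
  P !=set0 -> c < d -> (forall x, P x -> x <= c \/ exists2 i, x = v i & v i < d) ->
  sup P < d.
Proof.
move=> P0 lt_cd Px; pose B := \big[Num.max/c]_(i | v i < d) v i.
have lt_Bd : B < d by apply: bigmax_lt.
apply: le_lt_trans lt_Bd; apply: ge_sup => // x /Px [le_xc | [i -> lt_vid]].
  exact: le_trans le_xc (bigmax_ge_id _ _ _ _).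
exact: le_bigmax_cond.
Qed.

Lemma bathtub (R : realFieldType) (T : finType) (lt : rel T) (mu D f g : T -> R) :
  strict_total_order lt ->
  (forall x y, lt x y -> D x <= D y) ->
  (forall x y, lt x y -> 0 < f x -> f y = mu y) ->
  (forall x, 0 <= g x <= mu x) ->
  \sum_x f x = \sum_x g x ->
  \sum_x D x * g x <= \sum_x D x * f x.
Proof.
move=> [_ [_ tot]] D_mono f_full g_bnd fg_sum.
have [c [c_ub c_lb]] : exists c, (forall x, f x < mu x -> D x <= c) /\
                                 (forall y, 0 < f y -> c <= D y).
  apply: separating_constant => x y fx fy.
  have [-> // | nxy] := eqVneq x y.
  case/orP: (tot x y nxy) => [/D_mono // | lt_yx].
  by move: fx; rewrite (f_full _ _ lt_yx fy) ltxx.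
(* Below the threshold c the function f vanishes and above it f is full, so every
   term (D x - c) * (f x - g x) is nonnegative. *)
have -> : \sum_x D x * f x = \sum_x D x * g x + \sum_x (D x - c) * (f x - g x)
                              + c * (\sum_x f x - \sum_x g x).
  rewrite mulrBr !mulr_sumr -sumrB -!big_split /=.
  by apply: eq_bigr => x _; ring.
rewrite fg_sum subrr mulr0 addr0 lerDl; apply: sumr_ge0 => x _.
have /andP [gx0 gx1] := g_bnd x.
case: (ltgtP (D x) c) => [Dlt | Dgt | ->]; last by rewrite subrr mul0r.
- have : f x <= 0 by rewrite leNgt; apply: contraTN Dlt => /c_lb; rewrite -leNgt.
  nra.
- have : mu x <= f x by rewrite leNgt; apply: contraTN Dgt => /c_ub; rewrite -leNgt.
  nra.
Qed.

(** * Strategies and payoffs *)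

Section Game.
Variables (R : realType) (A Om M : finType) (mu0 : Om -> R).

Definition pure_msg (f : Om -> M) : Om -> M -> R := fun w m => (m == f w)%:R.
Definition pure_act (b : M -> A) : M -> A -> R := fun m a => (a == b m)%:R.

Definition msg_value (u : A -> Om -> R) (r : M -> A -> R) m w :=
  \sum_a r m a * u a w.
Definition act_value (u : A -> Om -> R) (s : Om -> M -> R) m a :=
  \sum_w mu0 w * s w m * u a w.
Definition marginal (s : Om -> M -> R) m := \sum_w mu0 w * s w m.

Definition shift (s : Om -> M -> R) w0 m1 m2 x : Om -> M -> R :=
  fun w m => s w m + (w == w0)%:R * x * ((m == m2)%:R - (m == m1)%:R).

Lemma pure_msg_strat f : msg_strat (pure_msg f).
Proof. by move=> w; split=> [m | ]; rewrite ?ler0n ?sumr_delta1. Qed.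

Lemma pure_act_strat b : act_strat (pure_act b).
Proof. by move=> m; split=> [a | ]; rewrite ?ler0n ?sumr_delta1. Qed.

Lemma U_msg_value u s r :
  U mu0 u s r = \sum_w \sum_m mu0 w * s w m * msg_value u r m w.
Proof.
apply: eq_bigr => w _; apply: eq_bigr => m _.
by rewrite /msg_value mulr_sumr; apply: eq_bigr => a _; ring.
Qed.

Lemma U_act_value u s r : U mu0 u s r = \sum_m \sum_a r m a * act_value u s m a.
Proof.
rewrite /U exchange_big /=; apply: eq_bigr => m _.
rewrite exchange_big /=; apply: eq_bigr => a _.
by rewrite /act_value mulr_sumr; apply: eq_bigr => w _; ring.
Qed.

Lemma msg_value_pure u b m w : msg_value u (pure_act b) m w = u (b m) w.
Proof. exact: sumr_delta. Qed.

Lemma U_pure_msg u f r : U mu0 u (pure_msg f) r = \sum_w mu0 w * msg_value u r (f w) w.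
Proof.
rewrite U_msg_value; apply: eq_bigr => w _.
rewrite -(sumr_delta (f w) (fun m => mu0 w * msg_value u r m w)).
by apply: eq_bigr => m _; rewrite /pure_msg; ring.
Qed.

Lemma U_pure u f b : U mu0 u (pure_msg f) (pure_act b) = \sum_w mu0 w * u (b (f w)) w.
Proof. by rewrite U_pure_msg; under eq_bigr do rewrite msg_value_pure. Qed.

Lemma sum_shift s w0 m1 m2 x m (G : Om -> R) :
  \sum_w mu0 w * shift s w0 m1 m2 x w m * G w =
  \sum_w mu0 w * s w m * G w + mu0 w0 * x * ((m == m2)%:R - (m == m1)%:R) * G w0.
Proof.
rewrite -(sumr_delta w0 (fun w => mu0 w * x * ((m == m2)%:R - (m == m1)%:R) * G w)).
by rewrite -big_split /=; apply: eq_bigr => w _; rewrite /shift; ring.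
Qed.

Lemma act_value_shift u s w0 m1 m2 x m a :
  act_value u (shift s w0 m1 m2 x) m a =
  act_value u s m a + mu0 w0 * x * ((m == m2)%:R - (m == m1)%:R) * u a w0.
Proof. exact: sum_shift. Qed.

Lemma marginal_shift s w0 m1 m2 x m :
  marginal (shift s w0 m1 m2 x) m =
  marginal s m + mu0 w0 * x * ((m == m2)%:R - (m == m1)%:R).
Proof.
rewrite /marginal -(sumr_delta w0 (fun w => mu0 w * x * _)) -big_split /=.
by apply: eq_bigr => w _; rewrite /shift; ring.
Qed.

Lemma U_shift u s r w0 m1 m2 x :
  U mu0 u (shift s w0 m1 m2 x) r =
  U mu0 u s r + mu0 w0 * x * (msg_value u r m2 w0 - msg_value u r m1 w0).
Proof.
rewrite !U_msg_value exchange_big [in RHS]exchange_big /=.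
under eq_bigr => m _ do rewrite (sum_shift s w0 m1 m2 x m (msg_value u r m)).
rewrite big_split /= mulrBr; congr (_ + _).
rewrite -(sumr_delta m2 (fun m => mu0 w0 * x * msg_value u r m w0)).
rewrite -(sumr_delta m1 (fun m => mu0 w0 * x * msg_value u r m w0)) -sumrB.
by apply: eq_bigr => m _; ring.
Qed.

Lemma shift_msg_strat s w0 m1 m2 x :
  msg_strat s -> 0 <= x <= s w0 m1 -> msg_strat (shift s w0 m1 m2 x).
Proof.
move=> s_strat /andP [x_ge0 x_le] w; have [s_ge0 s_sum] := s_strat w; split.
  move=> m; rewrite /shift; have [ew | nw] := eqVneq w w0; last by rewrite !mul0r addr0.
  subst w; have := s_ge0 m; rewrite mul1r.
  by have [-> | _] := eqVneq m m1; case: (_ == m2); rewrite ?eqxx /=; lra.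
rewrite /shift big_split /= s_sum -mulr_sumr sumrB !sumr_delta1.
by rewrite subrr mulr0 addr0.
Qed.

Lemma R_BR_pure u s b :
  (forall m a, act_value u s m a <= act_value u s m (b m)) -> R_BR mu0 u s (pure_act b).
Proof.
move=> b_best r r_strat; rewrite !U_act_value; apply: ler_sum => m _.
rewrite (sumr_delta (b m) (act_value u s m)).
have [r_ge0 r_sum] := r_strat m.
rewrite -[X in _ <= X]mul1r -r_sum mulr_suml.
by apply: ler_sum => a _; apply: ler_wpM2l.
Qed.

Lemma R_BR_at u s r m (q : A -> R) : act_strat r -> R_BR mu0 u s r -> is_dist q ->
  \sum_a q a * act_value u s m a <= \sum_a r m a * act_value u s m a.
Proof.
move=> r_strat r_br q_dist.
pose r' m' := if m' == m then q else r m'.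
have r'_strat : act_strat r' by move=> m'; rewrite /r'; case: eqP.
have := r_br r' r'_strat; rewrite !U_act_value (bigD1 m) // [X in _ <= X](bigD1 m) //=.
rewrite /r' eqxx (eq_bigr (fun i => \sum_a r i a * act_value u s i a)) ?lerD2r //.
by move=> i /negbTE ->.
Qed.

Lemma R_BR_strict_best u s r m b : act_strat r -> R_BR mu0 u s r ->
  (forall a, a != b -> act_value u s m a < act_value u s m b) ->
  r m = fun a => (a == b)%:R.
Proof.
move=> r_strat r_br b_best; have [r_ge0 r_sum] := r_strat m.
have := R_BR_at m r_strat r_br (pure_act_strat (fun _ => b) m).
rewrite /pure_act sumr_delta => b_le.
have gap_ge0 a : 0 <= act_value u s m b - act_value u s m a.
  by have [-> | /b_best/ltW] := eqVneq a b; rewrite subr_ge0.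
have term_ge0 a : 0 <= r m a * (act_value u s m b - act_value u s m a).
  exact: mulr_ge0.
have sum0 : \sum_a r m a * (act_value u s m b - act_value u s m a) = 0.
  apply/eqP; rewrite eq_le sumr_ge0 ?andbT => [|a _]; last exact: term_ge0.
  by under eq_bigr do rewrite mulrBr; rewrite sumrB -mulr_suml r_sum mul1r subr_le0.
have r0 a : a != b -> r m a = 0.
  move=> nab; have /eqP := psumr_eq0P (fun a _ => term_ge0 a) sum0 (i := a) isT.
  rewrite mulf_eq0 subr_eq0 => /orP [/eqP // | /eqP eq_ba].
  by move: (b_best a nab); rewrite eq_ba ltxx.
apply: (dist_eq_delta (r_strat m)); move: r_sum.
by rewrite (bigD1 b) //= big1 ?addr0 // => a /r0.
Qed.

Hypothesis mu0_gt0 : forall w, 0 < mu0 w.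
Hypothesis mu0_sum : \sum_w mu0 w = 1.

Lemma mu0_le1 w : mu0 w <= 1.
Proof.
rewrite -mu0_sum (bigD1 w) //= lerDl sumr_ge0 // => w' _.
exact: ltW.
Qed.

Lemma U_le_norm_sum (u : A -> Om -> R) (s : Om -> M -> R) r :
  msg_strat s -> act_strat r ->
  U mu0 u s r <= \sum_w \sum_a `|u a w|.
Proof.
move=> s_strat r_strat; rewrite U_msg_value; apply: ler_sum => w _.
have [s_ge0 s_sum] := s_strat w.
have v_le m : msg_value u r m w <= \sum_a `|u a w|.
  have [r_ge0 r_sum] := r_strat m; apply: ler_sum => a _.
  have r_le1 : r m a <= 1 by rewrite -r_sum (bigD1 a) //= lerDl sumr_ge0.
  apply: le_trans (ler_norm _) _; rewrite normrM ger0_norm //.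
  by rewrite -[X in _ <= X]mul1r ler_wpM2r.
apply: (@le_trans _ _ (\sum_m mu0 w * s w m * \sum_a `|u a w|)).
  by apply: ler_sum => m _; apply: ler_wpM2l (v_le m); rewrite mulr_ge0 ?s_ge0 ?ltW.
rewrite -mulr_suml -mulr_sumr s_sum mulr1 -[X in _ <= X]mul1r.
by apply: ler_wpM2r; rewrite ?mu0_le1 ?sumr_ge0.
Qed.

Lemma payoffs_bounded (P : (Om -> M -> R) -> (M -> A -> R) -> Prop)
    (u : A -> Om -> R) :
  (forall s r, P s r -> msg_strat s /\ act_strat r) ->
  has_ubound [set x | exists s r, P s r /\ x = U mu0 u s r].
Proof.
move=> P_strat; exists (\sum_w \sum_a `|u a w|) => _ [s [r [/P_strat [s_strat r_strat] ->]]].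
exact: U_le_norm_sum.
Qed.

(** * Assortative messaging under supermodularity *)

Section Supermodular.
Variables (uS : A -> Om -> R) (ltA : rel A) (ltO : rel Om).
Hypotheses (ltA_order : strict_total_order ltA) (ltO_order : strict_total_order ltO).
Hypothesis uS_supermod : supermodular_for ltA ltO uS.

Let KA := #|A|.
Let actions := sorted_elems ltA.

Definition step_gain x0 j w := uS (nth x0 actions j.+1) w - uS (nth x0 actions j) w.

Definition upper_mass (b : M -> A) (s : Om -> M -> R) j w :=
  \sum_m mu0 w * s w m * (j < rank ltA (b m))%:R.

Lemma step_gain_mono x0 j : (j.+1 < KA)%N ->
  forall x y, ltO x y -> step_gain x0 j x <= step_gain x0 j y.
Proof.
move=> hj x y lt_xy; apply/ltW/uS_supermod => //.
by rewrite -(ltn_rank ltA_order) !(rank_nth ltA) // (ltn_trans _ hj).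
Qed.

Lemma uS_telescope x0 a w :
  uS a w = uS (nth x0 actions 0) w +
    \sum_(0 <= j < KA.-1) (j < rank ltA a)%:R * step_gain x0 j w.
Proof.
have ra_le : (rank ltA a <= KA.-1)%N.
  by rewrite -ltnS prednK ?rank_lt_card // (leq_ltn_trans _ (rank_lt_card ltA a)).
rewrite (big_cat_nat (leq0n _) ra_le) /= [X in _ + (_ + X)]big1_seq ?addr0; last first.
  move=> j /andP [_]; rewrite mem_index_iota leqNgt => /andP [/negbTE -> _].
  by rewrite mul0r.
rewrite (eq_big_nat _ _ (F2 := fun j => step_gain x0 j w)) => [|j /andP [_ ->]];
  last by rewrite mul1r.
by rewrite telescope_sumr // nth_rank addrC subrK.
Qed.

Lemma U_thresholds x0 b s : msg_strat s ->
  U mu0 uS s (pure_act b) = \sum_w mu0 w * uS (nth x0 actions 0) w +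
     \sum_(0 <= j < KA.-1) \sum_w step_gain x0 j w * upper_mass b s j w.
Proof.
move=> s_strat; rewrite U_msg_value.
under eq_bigr => w _ do
  under eq_bigr => m _ do rewrite msg_value_pure (uS_telescope x0) mulrDr.
rewrite [X in _ = _ + X]exchange_big /= -big_split /=; apply: eq_bigr => w _.
rewrite big_split /= -mulr_suml -mulr_sumr (s_strat w).2 mulr1; congr (_ + _).
under eq_bigr do rewrite mulr_sumr; rewrite exchange_big /=; apply: eq_bigr => j _.
by rewrite /upper_mass mulr_sumr; apply: eq_bigr => m _; ring.
Qed.

Lemma upper_mass_sum b s j :
  \sum_w upper_mass b s j w = \sum_m (j < rank ltA (b m))%:R * marginal s m.
Proof.
rewrite /upper_mass exchange_big /=; apply: eq_bigr => m _.
by rewrite /marginal mulr_sumr; apply: eq_bigr => w _; ring.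
Qed.

Lemma upper_mass_bounds b s j w : msg_strat s -> 0 <= upper_mass b s j w <= mu0 w.
Proof.
move=> s_strat; have [s_ge0 s_sum] := s_strat w.
have mass_ge0 m : 0 <= mu0 w * s w m by rewrite mulr_ge0 ?s_ge0 ?ltW.
rewrite sumr_ge0 /= => [|m _]; last by rewrite mulr_ge0.
rewrite -[X in _ <= X]mulr1 -[in X in _ <= X]s_sum mulr_sumr; apply: ler_sum => m _.
by rewrite ler_piMr //; case: (_ < _)%N; rewrite ?ler01.
Qed.

Definition monotone_support (b : M -> A) (s : Om -> M -> R) :=
  forall x y m m', ltO x y -> 0 < s x m -> 0 < s y m' -> ~~ ltA (b m') (b m).

Lemma upper_mass_full b s j x y : msg_strat s -> monotone_support b s -> ltO x y ->
  0 < upper_mass b s j x -> upper_mass b s j y = mu0 y.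
Proof.
move=> s_strat s_mono lt_xy; rewrite {1}/upper_mass => /gt_eqF/negbT/eqP.
have term_ge0 m : 0 <= mu0 x * s x m * (j < rank ltA (b m))%:R.
  exact: mulr_ge0 (mulr_ge0 (ltW (mu0_gt0 x)) ((s_strat x).1 m)) (ler0n _ _).
case/(psumr_neq0P (fun m _ => term_ge0 m)) => m /= pos.
case jm : (j < rank ltA (b m))%N in pos; last by rewrite mulr0 ltxx in pos.
rewrite mulr1 pmulr_rgt0 // in pos.
have [s_ge0 s_sum] := s_strat y.
rewrite /upper_mass -[RHS]mulr1 -[in RHS]s_sum mulr_sumr; apply: eq_bigr => m' _.
have := s_ge0 m'; rewrite le0r => /orP [/eqP -> | pos']; first by rewrite mulr0 mul0r.
have := s_mono x y m m' lt_xy pos pos'; rewrite -(ltn_rank ltA_order) -leqNgt => le_rank.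
by rewrite (leq_trans jm le_rank) mulr1.
Qed.

(* Each threshold term is a bathtub problem: the step gains increase with the type,
   and a monotone strategy fills the highest types first. *)
Lemma monotone_msg_optimal b s s' : msg_strat s -> monotone_support b s ->
  msg_strat s' -> same_marginal mu0 s s' ->
  U mu0 uS s' (pure_act b) <= U mu0 uS s (pure_act b).
Proof.
move=> s_strat s_mono s'_strat marg.
case: (pickP (@predT A)) => [x0 _ | A0]; last first.
  have U0 s'' : U mu0 uS s'' (pure_act b) = 0.
    by rewrite /U big1 // => w _; rewrite big1 // => m _; rewrite big_pred0.
  by rewrite !U0.
rewrite !(U_thresholds x0) // lerD2l; apply: ler_sum_nat => j /andP [_ hj].
have hj1 : (j.+1 < KA)%N by rewrite -ltn_predRL.
apply: (bathtub (mu := mu0) ltO_order (step_gain_mono x0 hj1)) => [x y | w |].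
- exact: upper_mass_full.
- exact: upper_mass_bounds.
- by rewrite !upper_mass_sum; apply: eq_bigr => m _; rewrite /marginal marg.
Qed.

Definition profitable_up (al : Om -> A) v c :=
  ltA (al v) (al c) && (uS (al v) v < uS (al c) v).

Lemma adjacent_profitable_up (al : Om -> A) :
  (forall w1 w2, ltO w1 w2 -> ~~ ltA (al w2) (al w1)) ->
  forall v c, profitable_up al v c ->
  exists v' c', profitable_up al v' c' /\ forall y, ltO v' y -> ~~ ltA (al y) (al c').
Proof.
move=> al_mono v0 c0 up0.
have [irrA [trA totA]] := ltA_order; have [irrO [_ totO]] := ltO_order.
have ltO_of_ltA x y : ltA (al x) (al y) -> ltO x y.
  move=> lt_xy; have [exy | nxy] := eqVneq x y.
    by move: lt_xy; rewrite exy (negbTE (irrA _)).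
  by case/orP: (totO x y nxy) => // /al_mono; rewrite lt_xy.
pose gap (p : Om * Om) := (rank ltA (al p.2) - rank ltA (al p.1))%N.
case: (arg_minnP gap (P := fun p => profitable_up al p.1 p.2) (i0 := (v0, c0)) up0).
move=> [v c] /= /andP [vc uv] gap_min.
have ranks x y : ltA (al x) (al y) -> (rank ltA (al x) < rank ltA (al y))%N.
  by rewrite (ltn_rank ltA_order).
(* A profitable upward deviation of minimal rank gap skips no induced action. *)
have no_between x : ltA (al v) (al x) -> ~~ ltA (al x) (al c).
  move=> vx; apply/negP => xc; have := ranks _ _ vx; have := ranks _ _ xc.
  have [ux | ] := boolP (uS (al v) v < uS (al x) v).
    by have := gap_min (v, x); rewrite /= /profitable_up vx ux /gap /= => /(_ isT); lia.
  rewrite -leNgt => xv.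
  have := uS_supermod xc (ltO_of_ltA _ _ vx) => smod.
  have := gap_min (x, c); rewrite /= /profitable_up xc /gap /= => gap_le.
  have : uS (al x) x < uS (al c) x by lra.
  by move=> ux; move: (gap_le ux); lia.
have [v' /eqP v'_eq v'_max] :=
  exists_lt_max ltO_order (P := fun y => al y == al v) (x := v) (eqxx _).
exists v', c; split.
  rewrite /profitable_up v'_eq vc /=; have [<- // | nvv'] := eqVneq v v'.
  have lt_vv' : ltO v v'.
    by case/orP: (totO _ _ nvv') => // lt_v'v; move: (v'_max v (eqxx _)); rewrite lt_v'v.
  by have := uS_supermod vc lt_vv'; lra.
move=> y lt_v'y; apply: no_between; rewrite -v'_eq.
have nyv' : al y != al v'.
  by apply: contraTneq lt_v'y => eq_y; apply: v'_max; rewrite /= eq_y v'_eq.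
by case/orP: (totA _ _ nyv') => // lt_yv'; move: (al_mono _ _ lt_v'y); rewrite lt_yv'.
Qed.

End Supermodular.

(** * Partitional curve equilibria *)

Definition generic (u : A -> Om -> R) := forall (P : {set Om}) a a',
  (0 < #|P|)%N -> a != a' -> \sum_(w in P) mu0 w * (u a w - u a' w) != 0.

Section Partitional.
Variables (uS uR : A -> Om -> R) (a0 : A) (w0 : Om).

Definition used (f : Om -> M) m := [exists w, f w == m].
Definition best (f : Om -> M) m :=
  [arg max_(a > a0) act_value uR (pure_msg f) m a]%O.
(* Off-path messages are answered with an on-path action, so that no type gains
   by deviating to them. *)
Definition response (f : Om -> M) m := if used f m then best f m else best f (f w0).
Definition induced (f : Om -> M) w := best f (f w).
Definition induced_value (f : Om -> M) := \sum_w mu0 w * uS (induced f w) w.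
Definition best_margin (f : Om -> M) e := forall m a, used f m -> a != best f m ->
  e <= act_value uR (pure_msg f) m (best f m) - act_value uR (pure_msg f) m a.

Lemma used_f f w : used f (f w).
Proof. by apply/existsP; exists w. Qed.

Lemma response_f f w : response f (f w) = induced f w.
Proof. by rewrite /response used_f. Qed.

Lemma response_range f m : exists w, response f m = induced f w.
Proof.
rewrite /response; case: ifP => [/existsP [w /eqP <-] | _]; last by exists w0.
by exists w.
Qed.

Lemma pure_msg_unused f m w : ~~ used f m -> pure_msg f w m = 0.
Proof.
move=> unused; rewrite /pure_msg; suff /negbTE -> : m != f w by [].
by apply: contraNneq unused => ->; apply: used_f.
Qed.

Lemma act_value_unused u f m a : ~~ used f m -> act_value u (pure_msg f) m a = 0.
Proof.
by move=> unused; rewrite /act_value big1 // => w _; rewrite pure_msg_unused // mulr0 mul0r.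
Qed.

Lemma act_value_pure_diff f m a a' :
  act_value uR (pure_msg f) m a - act_value uR (pure_msg f) m a' =
  \sum_(w | f w == m) mu0 w * (uR a w - uR a' w).
Proof.
rewrite /act_value -sumrB [RHS]big_mkcond /=; apply: eq_bigr => w _.
by rewrite /pure_msg eq_sym; case: (f w == m); rewrite /=; ring.
Qed.

Lemma best_max f m a :
  act_value uR (pure_msg f) m a <= act_value uR (pure_msg f) m (best f m).
Proof.
rewrite /best; case: (arg_maxP (act_value uR (pure_msg f) m) (isT : predT a0)) => b _.
exact.
Qed.

Lemma response_max f m a :
  act_value uR (pure_msg f) m a <= act_value uR (pure_msg f) m (response f m).
Proof.
rewrite /response; case: ifP => [_ | /negbT unused]; first exact: best_max.
by rewrite !act_value_unused.
Qed.

Lemma response_R_BR f : R_BR mu0 uR (pure_msg f) (pure_act (response f)).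
Proof. by apply: R_BR_pure => m a; apply: response_max. Qed.

Lemma same_marginal_unused f s' m w :
  msg_strat s' -> same_marginal mu0 (pure_msg f) s' -> ~~ used f m -> s' w m = 0.
Proof.
move=> s'_strat marg unused.
have sum0 : \sum_w mu0 w * s' w m = 0.
  by rewrite marg big1 // => w' _; rewrite pure_msg_unused // mulr0.
have mass_ge0 w' : 0 <= mu0 w' * s' w' m by rewrite mulr_ge0 ?(s'_strat w').1 ?ltW.
have /eqP := psumr_eq0P (fun w' _ => mass_ge0 w') sum0 (i := w) isT.
by rewrite mulf_eq0 (gt_eqF (mu0_gt0 w)) => /eqP.
Qed.

Lemma U_pure_response f : U mu0 uS (pure_msg f) (pure_act (response f)) = induced_value f.
Proof. by rewrite U_pure; apply: eq_bigr => w _; rewrite response_f. Qed.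

Lemma U_on_path (u : A -> Om -> R) f (s : Om -> M -> R) (r r' : M -> A -> R) :
  msg_strat s -> same_marginal mu0 (pure_msg f) s ->
  (forall w, r (f w) = r' (f w)) -> U mu0 u s r = U mu0 u s r'.
Proof.
move=> s_strat marg rr'; rewrite !U_msg_value.
apply: eq_bigr => w _; apply: eq_bigr => m _.
have [/existsP [w' /eqP <-] | unused] := boolP (used f m); first by rewrite /msg_value rr'.
by rewrite (same_marginal_unused w s_strat marg unused) !mulr0 !mul0r.
Qed.

Lemma partitional_pure (s : Om -> M -> R) : msg_strat s -> partitional s ->
  exists f : {ffun Om -> M}, s = pure_msg f.
Proof.
move=> s_strat /fin_all_exists [f fP]; exists [ffun w => f w].
by apply: funext => w; rewrite /pure_msg ffunE; apply: dist_eq_delta.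
Qed.

Hypothesis uR_generic : generic uR.

Lemma best_strict f m a : used f m -> a != best f m ->
  act_value uR (pure_msg f) m a < act_value uR (pure_msg f) m (best f m).
Proof.
move=> /existsP [w /eqP fw] na.
rewrite lt_neqAle best_max andbT -subr_eq0 act_value_pure_diff.
have := uR_generic (P := [set w | f w == m]%SET) _ na.
rewrite (eq_bigl (fun w => f w == m)) => [|x]; last by rewrite inE.
by apply; apply/card_gt0P; exists w; rewrite inE fw.
Qed.

Lemma curve_eq_partitional (s : Om -> M -> R) r :
  curve_eq mu0 uS uR s r -> partitional s ->
  exists f : {ffun Om -> M}, U mu0 uS s r = induced_value f /\
    curve_eq mu0 uS uR (pure_msg f) (pure_act (response f)).
Proof.
move=> [s_strat [r_strat [s_opt r_br]]] s_part.
have [f sf] := partitional_pure s_strat s_part; subst s.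
have r_on_path w : r (f w) = pure_act (response f) (f w).
  rewrite /pure_act response_f; apply: (R_BR_strict_best r_strat r_br) => a na.
  exact: best_strict (used_f f w) na.
have U_resp s' : msg_strat s' -> same_marginal mu0 (pure_msg f) s' ->
    U mu0 uS s' r = U mu0 uS s' (pure_act (response f)).
  by move=> s'_strat marg; apply: U_on_path.
exists f; split; first by rewrite U_resp ?pure_msg_strat // U_pure_response.
split; first exact: pure_msg_strat.
split; first exact: pure_act_strat.
split; last exact: response_R_BR.
by move=> s' s'_strat marg; rewrite -!U_resp ?pure_msg_strat //; apply: s_opt.
Qed.

Lemma IC_cheap_talk_eq f : (forall w w', uS (induced f w') w <= uS (induced f w) w) ->
  cheap_talk_eq mu0 uS uR (pure_msg f) (pure_act (response f)).
Proof.
move=> IC; split; first exact: pure_msg_strat.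
split; first exact: pure_act_strat.
split; last exact: response_R_BR.
move=> s' s'_strat; rewrite U_msg_value U_pure; apply: ler_sum => w _.
have [s'_ge0 s'_sum] := s'_strat w.
rewrite -[X in _ <= X]mulr1 -s'_sum mulr_sumr; apply: ler_sum => m _.
rewrite msg_value_pure mulrAC; have [w' ->] := response_range f m.
by rewrite response_f; apply: ler_wpM2r => //; apply: ler_wpM2l; [exact: ltW | exact: IC].
Qed.

Lemma babbling_curve_eq m0 :
  curve_eq mu0 uS uR (pure_msg (fun _ => m0)) (pure_act (response (fun _ => m0))).
Proof.
split; first exact: pure_msg_strat.
split; first exact: pure_act_strat.
split; last exact: response_R_BR.
move=> s' s'_strat marg.
have unused m : m != m0 -> ~~ used (fun _ => m0) m.
  by move=> nm; apply/existsP => -[w /eqP em]; move: nm; rewrite em eqxx.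
suff -> : s' = pure_msg (fun _ => m0) by [].
apply: funext => w; apply: dist_eq_delta => //; have [_ s'_sum] := s'_strat w.
move: s'_sum; rewrite (bigD1 m0) //= big1 ?addr0 // => m /unused.
exact: same_marginal_unused.
Qed.

Hypothesis uR01 : forall a w, 0 <= uR a w <= 1.

Lemma best_margin_pos f : exists2 e, 0 < e <= 1 & best_margin f e.
Proof.
pose gap (p : M * A) :=
  act_value uR (pure_msg f) p.1 (best f p.1) - act_value uR (pure_msg f) p.1 p.2.
pose P (p : M * A) := used f p.1 && (p.2 != best f p.1).
exists (\big[Num.min/1]_(p | P p) gap p); last first.
  by move=> m a um na; apply: (bigmin_le_cond _ (j := (m, a))); rewrite /P um.
rewrite bigmin_le_id andbT; apply/bigmin_gtP; split=> // -[m a] /andP [um na].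
by rewrite subr_gt0 best_strict.
Qed.

Lemma shift_response_R_BR f v c e : 0 <= e -> best_margin f e ->
  R_BR mu0 uR (shift (pure_msg f) v (f v) (f c) e) (pure_act (response f)).
Proof.
move=> e_ge0 e_gap; apply: R_BR_pure => m a; rewrite !act_value_shift.
set k : R := (m == f c)%:R - (m == f v)%:R.
have [um | unused] := boolP (used f m); last first.
  have /negbTE nc : m != f c by apply: contraNneq unused => ->; apply: used_f.
  have /negbTE nv : m != f v by apply: contraNneq unused => ->; apply: used_f.
  by rewrite /k nc nv subrr !(mulr0, mul0r) !addr0 response_max.
rewrite /response um; have [-> // | na] := eqVneq a (best f m).
have k_le1 : `|k| <= 1.
  rewrite /k; case: (_ == f c); case: (_ == f v);
  by rewrite /= ?subrr ?subr0 ?sub0r ?normrN ?normr0 ?normr1.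
have d_le1 : `|uR a v - uR (best f m) v| <= 1.
  by have := uR01 a v; have := uR01 (best f m) v; rewrite ler_norml; lra.
have q_le1 : mu0 v * k * (uR a v - uR (best f m) v) <= 1.
  apply: le_trans (ler_norm _) _; rewrite !normrM (ger0_norm (ltW (mu0_gt0 v))).
  by rewrite !mulr_ile1 ?mulr_ge0 ?mu0_le1 ?(ltW (mu0_gt0 v)).
have := e_gap m a um na; have := ler_wpM2l e_ge0 q_le1; rewrite mulr1.
have -> : e * (mu0 v * k * (uR a v - uR (best f m) v)) =
  mu0 v * e * k * uR a v - mu0 v * e * k * uR (best f m) v by ring.
lra.
Qed.

Lemma shift_pure_support f v m' e x n :
  0 < shift (pure_msg f) v (f v) m' e x n -> n = f x \/ (x = v /\ n = m').
Proof.
rewrite /shift /pure_msg; have [-> | nfx] := eqVneq n (f x); first by left.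
have [exv | nxv] := eqVneq x v; last by rewrite !mul0r addr0 ltxx.
have [-> | nm'] := eqVneq n m'; first by right.
by rewrite -exv (negbTE nfx) subrr mulr0 addr0 ltxx.
Qed.

Section Orders.
Variables (ltA : rel A) (ltO : rel Om).
Hypotheses (ltA_order : strict_total_order ltA) (ltO_order : strict_total_order ltO).
Hypothesis uS_supermod : supermodular_for ltA ltO uS.

(* Otherwise two types could exchange part of their messages without changing the
   marginal and gain by supermodularity. *)
Lemma curve_eq_induced_monotone f :
  curve_eq mu0 uS uR (pure_msg f) (pure_act (response f)) ->
  forall w1 w2, ltO w1 w2 -> ~~ ltA (induced f w2) (induced f w1).
Proof.
move=> [_ [_ [s_opt _]]] w1 w2 lt12; apply/negP => lt21.
have n12 : w1 != w2 by apply: contraTneq lt12 => ->; apply: ltO_order.1.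
pose s1 := shift (pure_msg f) w1 (f w1) (f w2) (mu0 w2).
pose s2 := shift s1 w2 (f w2) (f w1) (mu0 w1).
have s1_strat : msg_strat s1.
  apply: shift_msg_strat; first exact: pure_msg_strat.
  by rewrite /pure_msg eqxx (ltW (mu0_gt0 _)) mu0_le1.
have s2_strat : msg_strat s2.
  apply: shift_msg_strat => //; have n21 : (w2 == w1) = false by rewrite eq_sym (negbTE n12).
  by rewrite /s1 /shift /pure_msg eqxx n21 !mul0r addr0 (ltW (mu0_gt0 _)) mu0_le1.
have marg : same_marginal mu0 (pure_msg f) s2.
  by move=> m; rewrite -/(marginal s2 m) -/(marginal _ m) !marginal_shift; ring.
have := s_opt s2 s2_strat marg; rewrite !U_shift !msg_value_pure !response_f.
have := uS_supermod lt21 lt12; have := mulr_gt0 (mu0_gt0 w1) (mu0_gt0 w2); nra.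
Qed.

Lemma monotone_profitable_up_improves (f : Om -> M) v c :
  (forall w1 w2, ltO w1 w2 -> ~~ ltA (induced f w2) (induced f w1)) ->
  profitable_up uS ltA (induced f) v c ->
  (forall y, ltO v y -> ~~ ltA (induced f y) (induced f c)) ->
  exists (s : Om -> M -> R) r, curve_eq mu0 uS uR s r /\ induced_value f < U mu0 uS s r.
Proof.
move=> ind_mono /andP [vc uvc] top_v.
have [e /andP [e_gt0 e_le1] e_gap] := best_margin_pos f.
pose s := shift (pure_msg f) v (f v) (f c) e.
have s_strat : msg_strat s.
  apply: shift_msg_strat; first exact: pure_msg_strat.
  by rewrite /pure_msg eqxx (ltW e_gt0).
have s_mono : monotone_support ltA ltO (response f) s.
  move=> x y n n' lt_xy.
  move=> /shift_pure_support [-> | [ex ->]] /shift_pure_support [-> | [ey ->]].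
  - by rewrite !response_f; apply: ind_mono.
  - subst y; rewrite !response_f; apply/negP => cx.
    by move: (ind_mono _ _ lt_xy); rewrite (ltA_order.2.1 _ _ _ vc cx).
  - by subst x; rewrite !response_f; apply: top_v.
  - by subst x y; move: lt_xy; rewrite (negbTE (ltO_order.1 v)).
exists s, (pure_act (response f)); split.
  split=> //; split; first exact: pure_act_strat.
  split; last exact: shift_response_R_BR (ltW e_gt0) e_gap.
  by move=> s' s'_strat; apply: (monotone_msg_optimal ltA_order ltO_order uS_supermod).
rewrite U_shift !msg_value_pure !response_f -U_pure_response ltrDl.
by rewrite !mulr_gt0 ?subr_gt0.
Qed.

Lemma profitable_up_improves (f : Om -> M) v c :
  curve_eq mu0 uS uR (pure_msg f) (pure_act (response f)) ->
  profitable_up uS ltA (induced f) v c ->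
  exists (s : Om -> M -> R) r, curve_eq mu0 uS uR s r /\ induced_value f < U mu0 uS s r.
Proof.
move=> eq_f up; have ind_mono := curve_eq_induced_monotone eq_f.
have [v' [c' [up' top]]] :=
  adjacent_profitable_up ltA_order ltO_order uS_supermod ind_mono up.
exact: monotone_profitable_up_improves ind_mono up' top.
Qed.

End Orders.

Lemma partitional_curve_value (ltA : rel A) (ltO : rel Om) :
  strict_total_order ltA -> strict_total_order ltO ->
  supermodular_for ltA ltO uS ->
  forall (s : Om -> M -> R) r, curve_eq mu0 uS uR s r -> partitional s ->
  exists f : {ffun Om -> M}, U mu0 uS s r = induced_value f /\
    (cheap_talk_eq mu0 uS uR (pure_msg f) (pure_act (response f)) \/
     exists (s' : Om -> M -> R) r',
       curve_eq mu0 uS uR s' r' /\ induced_value f < U mu0 uS s' r').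
Proof.
move=> ltA_order ltO_order uS_supermod s r eq_sr s_part.
have [f [-> eq_f]] := curve_eq_partitional eq_sr s_part; exists f; split=> //.
have [IC | /forallPn [w /forallPn [w']]] :=
  boolP [forall w, forall w', uS (induced f w') w <= uS (induced f w) w].
  by left; apply: IC_cheap_talk_eq => w w'; move/forallP: IC => /(_ w) /forallP.
rewrite -ltNge => dev; right.
have /orP [up | down] :
    ltA (induced f w) (induced f w') || ltA (induced f w') (induced f w).
  by apply: ltA_order.2.2; apply: contraTneq dev => ->; rewrite ltxx.
  have := profitable_up_improves ltA_order ltO_order uS_supermod eq_f (v := w) (c := w').
  by apply; rewrite /profitable_up up.
(* A downward deviation is an upward one for the reversed orders. *)
have := profitable_up_improves (strict_total_order_flip ltA_order)
  (strict_total_order_flip ltO_order) (supermodular_for_flip uS_supermod) eq_f (v := w) (c := w').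
by apply; rewrite /profitable_up down.
Qed.

End Partitional.

Lemma committing_values_randomization (uS uR : A -> Om -> R)
    (ltA : rel A) (ltO : rel Om) (a0 : A) (w0 : Om) (m0 : M) :
  strict_total_order ltA -> strict_total_order ltO ->
  supermodular_for ltA ltO uS -> (forall a w, 0 <= uR a w <= 1) -> generic uR ->
  values_committing M mu0 uS uR -> values_randomization M mu0 uS uR.
Proof.
move=> ltA_order ltO_order uS_supermod uR01 uR_generic.
rewrite /values_randomization /values_committing /curve_partitional_payoff.
rewrite /cheap_talk_payoff /curve_payoff => committing.
have CT_ub := payoffs_bounded uS
  (fun s r (eq : cheap_talk_eq mu0 uS uR s r) => conj eq.1 eq.2.1).
have CV_ub := payoffs_bounded uS (fun s r (eq : curve_eq mu0 uS uR s r) => conj eq.1 eq.2.1).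
pose value (f : {ffun Om -> M}) := induced_value uS uR a0 f.
apply: (sup_lt_finite_escape (v := value) _ committing).
  pose babble := pure_msg (fun _ : Om => m0).
  exists (U mu0 uS babble (pure_act (response uR a0 w0 (fun _ => m0)))).
  exists babble, (pure_act (response uR a0 w0 (fun _ => m0))); split=> //; split.
    exact: babbling_curve_eq.
  by move=> w; exists m0; rewrite /babble /pure_msg eqxx.
move=> _ [s [r [[eq_sr s_part] ->]]].
have [f [-> [eq_ct | [s' [r' [eq' lt']]]]]] :=
  partitional_curve_value a0 w0 uR_generic uR01 ltA_order ltO_order uS_supermod eq_sr s_part.
  left; rewrite -(U_pure_response _ _ _ w0); apply: (ub_le_sup CT_ub).
  by exists (pure_msg f), (pure_act (response uR a0 w0 f)).
right; exists f => //; apply: (lt_le_trans lt'); apply: (ub_le_sup CV_ub).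
by exists s', r'.
Qed.

End Game.

(** * Generic Receiver preferences have full measure *)

Section Grid.
Variable R : realType.

Definition cell n (x : R) : 'I_n.+1 := inord (minn (Num.truncn (x * n.+1%:R)) n).

Lemma cell_bounds n (x : R) : 0 <= x <= 1 ->
  (cell n x)%:R / n.+1%:R <= x <= (cell n x).+1%:R / n.+1%:R.
Proof.
move=> /andP [x_ge0 x_le1]; have N_gt0 : (0 : R) < n.+1%:R by rewrite ltr0n.
have /andP [t_le t_gt] := truncn_itv (mulr_ge0 x_ge0 (ltW N_gt0)).
rewrite /cell; set t := Num.truncn _ in t_le t_gt *.
rewrite inordK ?ltnS ?geq_minr // ler_pdivrMr // ler_pdivlMr //.
rewrite (le_trans _ t_le) ?ler_nat ?geq_minl //=.
case: leqP => _; first exact: ltW.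
by rewrite -[X in _ <= X]mul1r ler_wpM2r ?(ltW N_gt0).
Qed.

End Grid.

Section HyperplaneCover.
Variables (R : realType) (A Om : finType) (c : A -> Om -> R) (pa : A) (pw : Om).
Hypothesis c_pivot : c pa pw != 0.
Variable n : nat.

Let N : R := n.+1%:R.
Let N_gt0 : 0 < N. Proof. by rewrite ltr0n. Qed.

Definition grid := {ffun A -> {ffun Om -> 'I_n.+1}}.
Definition pivot b w := (b == pa) && (w == pw).
Definition pivot_ratio : R := (\sum_b \sum_w `|c b w|) / `|c pa pw|.
Definition slab_radius : R := pivot_ratio / N.
(* The value of the pivot coordinate on the hyperplane [\sum c u = 0] when every
   other coordinate sits at the lower corner of its grid cell. *)
Definition slab_center (g : grid) : R :=
  - (\sum_b \sum_w (if pivot b w then 0 else c b w * ((g b w)%:R / N))) / c pa pw.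
(* The pivot interval [center - radius, center + radius] is cut into n.+1 cells too,
   so that the boxes are indexed by the whole grid and their volumes add up to
   [2 * slab_radius]. *)
Definition slab_lo (g : grid) b w : R :=
  if pivot b w then slab_center g - slab_radius + 2 * slab_radius * ((g b w)%:R / N)
  else (g b w)%:R / N.
Definition slab_hi (g : grid) b w : R :=
  if pivot b w then slab_center g - slab_radius + 2 * slab_radius * ((g b w).+1%:R / N)
  else (g b w).+1%:R / N.

Lemma sum_pivot_split (F : A -> Om -> R) :
  \sum_b \sum_w F b w = F pa pw + \sum_b \sum_w (if pivot b w then 0 else F b w).
Proof.
rewrite -(sumr_delta pw (F pa)) -(sumr_delta pa (fun b => \sum_w (w == pw)%:R * F b w)).
rewrite -big_split /=.
apply: eq_bigr => b _; rewrite mulr_sumr -big_split /=; apply: eq_bigr => w _.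
by rewrite /pivot; case: (b == pa); case: (w == pw); rewrite /= ?(mul1r, mul0r, add0r, addr0).
Qed.

Lemma slab_radius_gt0 : 0 < slab_radius.
Proof.
apply: divr_gt0 => //; rewrite /pivot_ratio divr_gt0 ?normr_gt0 //.
rewrite (sum_pivot_split (fun b w => `|c b w|)) ltr_pwDl ?normr_gt0 //.
by rewrite sumr_ge0 // => b _; rewrite sumr_ge0 // => w _; case: pivot.
Qed.

Lemma slab_lo_le_hi g b w : slab_lo g b w <= slab_hi g b w.
Proof.
have step : (g b w)%:R / N <= (g b w).+1%:R / N by rewrite ler_pM2r ?invr_gt0 ?ler_nat.
rewrite /slab_lo /slab_hi; case: pivot => //.
by rewrite lerD2l ler_wpM2l // mulr_ge0 // ltW // slab_radius_gt0.
Qed.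

Lemma sum_slab_vol : \sum_(g : grid) box_vol (slab_lo g) (slab_hi g) = 2 * slab_radius.
Proof.
have vol g : box_vol (slab_lo g) (slab_hi g) = (N^-1 ^+ #|Om|) ^+ #|A| * (2 * slab_radius).
  rewrite /box_vol.
  transitivity (\prod_b \prod_w (N^-1 * (if pivot b w then 2 * slab_radius else 1))).
    apply: eq_bigr => b _; apply: eq_bigr => w _; rewrite /slab_hi /slab_lo -[(g b w).+1%:R]natr1.
    by case: pivot; field; rewrite addrC natr1 pnatr_eq0.
  under eq_bigr do rewrite big_split; rewrite big_split /= !prodr_const; congr (_ * _).
  rewrite (bigD1 pa) //= (bigD1 pw) //= /pivot !eqxx /= big1 => [|w /negbTE -> //].
  by rewrite mulr1 big1 ?mulr1 // => b /negbTE nb; apply: big1 => w _; rewrite nb.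
rewrite (eq_bigr _ (fun g _ => vol g)) sumr_const !card_ffun card_ord -[LHS]mulr_natr.
by rewrite !natrX mulrAC -!exprMn mulVf ?gt_eqF // !expr1n mul1r.
Qed.

Lemma pivot_near_center (u : A -> Om -> R) (g : grid) :
  \sum_b \sum_w c b w * u b w = 0 ->
  (forall b w, ~~ pivot b w -> (g b w)%:R / N <= u b w <= (g b w).+1%:R / N) ->
  `|u pa pw - slab_center g| <= slab_radius.
Proof.
move=> on_plane near.
pose S1 := \sum_b \sum_w (if pivot b w then 0 else c b w * u b w).
pose S2 := \sum_b \sum_w (if pivot b w then 0 else c b w * ((g b w)%:R / N)).
pose D := \sum_b \sum_w (if pivot b w then 0 else c b w * (u b w - (g b w)%:R / N)).
have D_eq : D = S1 - S2.
  rewrite /D /S1 /S2 -sumrB; apply: eq_bigr => b _; rewrite -sumrB.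
  by apply: eq_bigr => w _; case: pivot; rewrite ?subrr // mulrBr.
have u_pivot : u pa pw = - S1 / c pa pw.
  move: on_plane; rewrite (sum_pivot_split (fun b w => c b w * u b w)) -/S1 => /eqP.
  by rewrite addr_eq0 => /eqP <-; rewrite mulrC mulKf.
have D_le : `|D| <= (\sum_b \sum_w `|c b w|) / N.
  rewrite mulr_suml; apply: le_trans (ler_norm_sum _ _ _) _; apply: ler_sum => b _.
  rewrite mulr_suml; apply: le_trans (ler_norm_sum _ _ _) _; apply: ler_sum => w _.
  have [piv | npiv] := boolP (pivot b w).
    by rewrite normr0 divr_ge0 ?normr_ge0 ?(ltW N_gt0).
  have /andP [lo hi] := near b w npiv.
  rewrite normrM; apply: ler_wpM2l => //; rewrite ger0_norm ?subr_ge0 // lerBlDl.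
  by rewrite -natr1 mulrDl mul1r in hi.
have -> : u pa pw - slab_center g = - D / c pa pw.
  by rewrite u_pivot D_eq /slab_center -/S2; field.
rewrite normrM normrN normfV ler_pdivrMr ?normr_gt0 // /slab_radius /pivot_ratio.
by rewrite mulrAC divfK ?normr_eq0.
Qed.

Lemma hyperplane_slab_cover (u : A -> Om -> R) : (forall a w, 0 <= u a w <= 1) ->
  \sum_b \sum_w c b w * u b w = 0 ->
  exists g : grid, forall b w, slab_lo g b w <= u b w <= slab_hi g b w.
Proof.
move=> u01 on_plane; have r_gt0 := slab_radius_gt0.
pose g0 : grid := [ffun b => [ffun w => cell n (u b w)]].
have near0 b w : (g0 b w)%:R / N <= u b w <= (g0 b w).+1%:R / N.
  by rewrite !ffunE cell_bounds.
pose t := (u pa pw - slab_center g0 + slab_radius) / (2 * slab_radius).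
pose g : grid := [ffun b => [ffun w => if pivot b w then cell n t else g0 b w]].
have gE b w : g b w = if pivot b w then cell n t else g0 b w by rewrite !ffunE.
have center_g : slab_center g = slab_center g0.
  congr (- _ / _); apply: eq_bigr => b _; apply: eq_bigr => w _.
  by rewrite gE; case: pivot.
have t01 : 0 <= t <= 1.
  have := pivot_near_center (g := g0) on_plane (fun b w _ => near0 b w).
  rewrite ler_norml => /andP [lo hi]; apply/andP; split; first by apply: divr_ge0; lra.
  have r2_gt0 : 0 < 2 * slab_radius by apply: mulr_gt0.
  by rewrite ler_pdivrMr //; lra.
exists g => b w; rewrite /slab_lo /slab_hi center_g gE.
case piv : (pivot b w); last exact: near0.
case/andP: piv => /eqP -> /eqP ->.
have u_eq : u pa pw = slab_center g0 - slab_radius + 2 * slab_radius * t.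
  by rewrite /t; field; rewrite gt_eqF.
have /andP [lo hi] := cell_bounds n t01.
by rewrite u_eq !lerD2l !ler_wpM2l // mulr_ge0 ?(ltW r_gt0).
Qed.

End HyperplaneCover.

Section NullSets.
Variables (R : realType) (A Om : finType).

Lemma box_vol_ge0 (lo hi : A -> Om -> R) :
  (forall a w, lo a w <= hi a w) -> 0 <= box_vol lo hi.
Proof.
by move=> le; rewrite prodr_ge0 // => a _; rewrite prodr_ge0 // => w _; rewrite subr_ge0.
Qed.

Lemma box_vol0 (a0 : A) (w0 : Om) :
  box_vol (fun (_ : A) (_ : Om) => 0 : R) (fun _ _ => 0) = 0.
Proof. by rewrite /box_vol (bigD1 a0) //= (bigD1 w0) //= subrr !mul0r. Qed.

Lemma lebesgue_null_finite_cover (a0 : A) (w0 : Om) (N : set (A -> Om -> R)) :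
  (forall eps : R, 0 < eps -> exists (T : finType) (lo hi : T -> A -> Om -> R),
    [/\ forall t a w, lo t a w <= hi t a w,
        N `<=` \bigcup_t [set u | forall a w, lo t a w <= u a w <= hi t a w] &
        \sum_t box_vol (lo t) (hi t) <= eps]) ->
  lebesgue_null N.
Proof.
move=> cover eps eps_gt0; have [T [lo [hi [le_lohi N_sub vol_le]]]] := cover eps eps_gt0.
(* List the boxes and pad with the degenerate box at the origin, which has volume 0
   because A and Om are nonempty. *)
pose d : (A -> Om -> R) * (A -> Om -> R) := (fun _ _ => 0, fun _ _ => 0).
pose boxes := [seq (lo t, hi t) | t <- enum T].
have box_in k : (k < size boxes)%N -> exists t, nth d boxes k = (lo t, hi t).
  by move/(mem_nth d)/mapP => [t _ ->]; exists t.
have box_le k a w : (nth d boxes k).1 a w <= (nth d boxes k).2 a w.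
  have [/box_in [t ->] | out] := ltnP k (size boxes); first exact: le_lohi.
  by rewrite nth_default.
exists (fun k => (nth d boxes k).1), (fun k => (nth d boxes k).2); split=> //; split.
  move=> u /N_sub [t _ u_in]; exists (index t (enum T)) => //.
  by rewrite /= (nth_map t d) ?index_mem ?mem_enum // nth_index ?mem_enum.
pose vol k := box_vol (nth d boxes k).1 (nth d boxes k).2.
move=> n; apply: le_trans (sumr_le_support (F := vol) (K := size boxes) n _ _) _;
  [move=> k | move=> k out | ].
- exact: box_vol_ge0.
- by rewrite /vol nth_default // (box_vol0 a0 w0).
rewrite -(big_mkord xpredT vol).
by rewrite -(big_nth d xpredT (fun b => box_vol b.1 b.2)) big_map big_enum.
Qed.

End NullSets.

Section NongenericNull.
Variables (R : realType) (A Om : finType) (mu0 : Om -> R) (a0 : A) (w0 : Om).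
Hypothesis mu0_gt0 : forall w, 0 < mu0 w.

Definition pair_index := ({set Om} * A * A)%type.
Definition nondegenerate (i : pair_index) := (0 < #|i.1.1|)%N && (i.1.2 != i.2).
Definition pair_coef (i : pair_index) b w : R :=
  (w \in i.1.1)%:R * mu0 w * ((b == i.1.2)%:R - (b == i.2)%:R).
Definition pair_pivot (i : pair_index) : Om := odflt w0 [pick w in i.1.1].

Lemma pair_coef_sum i (u : A -> Om -> R) :
  \sum_b \sum_w pair_coef i b w * u b w = \sum_(w in i.1.1) mu0 w * (u i.1.2 w - u i.2 w).
Proof.
rewrite exchange_big /= [RHS]big_mkcond /=; apply: eq_bigr => w _.
transitivity (\sum_b ((b == i.1.2)%:R * ((w \in i.1.1)%:R * mu0 w * u b w) -
                      (b == i.2)%:R * ((w \in i.1.1)%:R * mu0 w * u b w))).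
  by apply: eq_bigr => b _; rewrite /pair_coef; ring.
by rewrite sumrB !sumr_delta; case: (w \in i.1.1); rewrite /=; ring.
Qed.

Lemma pair_coef_pivot i : nondegenerate i -> pair_coef i i.1.2 (pair_pivot i) != 0.
Proof.
case/andP => /card_gt0P [w0' w0'_in] ni.
have pivot_in : pair_pivot i \in i.1.1.
  by rewrite /pair_pivot; case: pickP => [w // | none]; move: (none w0'); rewrite w0'_in.
by rewrite /pair_coef pivot_in eqxx (negbTE ni) subr0 mulr1 mul1r gt_eqF.
Qed.

Lemma nongeneric_null :
  lebesgue_null (@unit_cube R A Om `\` [set u | unit_cube u /\ generic mu0 u]).
Proof.
apply: (lebesgue_null_finite_cover a0 w0) => eps eps_gt0.
pose ratio i :=
  if nondegenerate i then pivot_ratio (pair_coef i) i.1.2 (pair_pivot i) else 0.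
pose K := \sum_i ratio i.
pose n := Num.truncn (2 * K / eps).
pose lo (t : pair_index * grid A Om n) := if nondegenerate t.1
  then slab_lo (pair_coef t.1) t.1.1.2 (pair_pivot t.1) t.2 else fun _ _ => 0.
pose hi (t : pair_index * grid A Om n) := if nondegenerate t.1
  then slab_hi (pair_coef t.1) t.1.1.2 (pair_pivot t.1) t.2 else fun _ _ => 0.
exists (pair_index * grid A Om n)%type, lo, hi; split.
- move=> [i g] a w; rewrite /lo /hi /=; case nd: (nondegenerate i) => //.
  exact: (slab_lo_le_hi (pair_coef_pivot nd) (n := n)).
- move=> u [u01 nongeneric].
  have [[i [nd on_plane]] | none] :=
    pselect (exists i, nondegenerate i /\ \sum_b \sum_w pair_coef i b w * u b w = 0).
    have [g g_in] := hyperplane_slab_cover (pair_coef_pivot nd) n u01 on_plane.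
    by exists (i, g) => //; rewrite /lo /hi /= nd.
  exfalso; apply: nongeneric; split=> // P a a' P_gt0 na; apply/eqP => sum0.
  by apply: none; exists (P, a, a'); rewrite pair_coef_sum /nondegenerate P_gt0 na.
- rewrite -(pair_bigA _ (fun i g => box_vol (lo (i, g)) (hi (i, g)))) /=.
  have N_gt0 : (0 : R) < n.+1%:R by rewrite ltr0n.
  apply: (@le_trans _ _ (2 * K / n.+1%:R)).
    rewrite mulr_sumr mulr_suml; apply: ler_sum => i _; rewrite /lo /hi /ratio /=.
    case: ifP => nd; last by rewrite big1 ?mulr0 ?mul0r // => g _; apply: box_vol0.
    by rewrite sum_slab_vol mulrA.
  rewrite ler_pdivrMr // [eps * _]mulrC -ler_pdivrMr //.
  exact/ltW/truncnS_gt.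
Qed.

End NongenericNull.

Theorem theorem6 (R : realType) (A Om M : finType)
  (mu0 : Om -> R) (uS : A -> Om -> R) :
  (0 < #|A|)%N -> (0 < #|Om|)%N ->
  is_dist mu0 -> (forall w, 0 < mu0 w) ->
  (maxn #|Om| #|A| < #|M|)%N ->
  strictly_supermodular uS ->
  exists S : set (A -> Om -> R),
    full_measure_in_cube S /\
    forall uR, S uR ->
      values_committing M mu0 uS uR -> values_randomization M mu0 uS uR.
Proof.
move=> /card_gt0P [a0 _] /card_gt0P [w0 _] [_ mu0_sum] mu0_gt0 M_big.
move=> [ltA [ltO [ltA_order [ltO_order uS_supermod]]]].
have [m0 _] := card_gt0P (leq_ltn_trans (leq0n _) M_big).
exists [set u | unit_cube u /\ generic mu0 u]; split.
  by split=> [u [] // | ]; apply: nongeneric_null.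
move=> uR [uR01 uR_generic].
exact: (committing_values_randomization mu0_gt0 mu0_sum a0 w0 m0 ltA_order ltO_order uS_supermod).
Qed.
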